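(* Let $d\ge2$ and $\gamma>0$. For $N\ge c(\gamma)$, $P$-almost surely on the event $\{T_N<\gamma N^{2d}\}$ there exist $x_* = z_*e_{d+1}$ with $|z_*|\le N^{2d+1}$ and a $*$-path contained in $U\cap X_{[0,T_N]}$ starting at $x_*$ and ending in $S(x_*,[\sqrt N])$, where $U = \big[-2[\sqrt N],2[\sqrt N]\big]e_1 + \mathbb{Z}e_{d+1}$ (viewed as a subset of $E$).
   Context: $\mathbb{T}=(\mathbb{Z}/N\mathbb{Z})^d$, $E=\mathbb{T}\times\mathbb{Z}$, $P$ the law of simple random walk $X_\cdot$ on $E$ started uniformly on $\mathbb{T}\times\{0\}$; $X_{[0,n]} = \{X_0,\dots,X_n\}$. $e_1,\dots,e_{d+1}$ is the canonical basis (images in $E$, with $e_{d+1}$ the vertical direction). A finite $S\subset E$ disconnects $E$ if for large $M$, $\mathbb{T}\times(-\infty,-M]$ and $\mathbb{T}\times[M,\infty)$ are in distinct connected components of $E\setminus S$; $T_N = \inf\{n\ge0: X_{[0,n]}\text{ disconnects }E\}$. Two points are $*$-neighbors if their $\ell^\infty$-distance is 1; a $*$-path is a finite sequence of consecutive $*$-neighbors. $S(x,r)$ is the $\ell^\infty$-sphere of radius $r$ centered at $x$. $[\cdot]$ denotes integer part. *)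

From HB Require Import structures.
From mathcomp Require Import all_boot all_order all_algebra.
From mathcomp Require Import all_classical all_reals all_analysis.
Set Implicit Arguments. Unset Strict Implicit. Unset Printing Implicit Defensive.
Import Order.TTheory GRing.Theory Num.Theory.
Local Open Scope classical_set_scope.
Local Open Scope ring_scope.

Definition torus (N d : nat) := {ffun 'I_d -> 'I_N}.
Definition E (N d : nat) := (torus N d * int)%type.

(* The 2(d+1) steps +-e_1, ..., +-e_{d+1}: (i, b) with i : 'I_(d+1),
   i = ord_max meaning the vertical direction e_{d+1}; b = true for +, false for -. *)
Definition step (d : nat) := ('I_d.+1 * bool)%type.

Definition move (N d : nat) (x : E N d) (s : step d) : E N d :=
  let: (i, b) := s in
  if (i : nat) == d then (x.1, if b then x.2 + 1 else x.2 - 1)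
  else ([ffun j : 'I_d => if (j : nat) == (i : nat)
                          then (if b then ordS (x.1 j) else ord_pred (x.1 j))
                          else x.1 j], x.2).

Definition adj (N d : nat) (x y : E N d) : bool := [exists s : step d, move x s == y].

Definition p_init (R : realType) (N d : nat) (x : E N d) : R :=
  if x.2 == 0 then (N ^ d)%:R^-1 else 0.

Definition p_trans (R : realType) (N d : nat) (x y : E N d) : R :=
  #|[pred s : step d | move x s == y]|%:R / (2 * d.+1)%:R.

(* X is (under P) a simple random walk on E started uniformly on T x {0}:
   each X k is measurable (events {X k = v}), and the finite-dimensional
   distributions are those of the Markov chain with the above kernel. *)
Definition is_SRW (R : realType) (N d : nat) (dO : measure_display)
  (Omega : measurableType dO) (P : probability Omega R)
  (X : nat -> Omega -> E N d) : Prop :=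
  (forall k (v : E N d), measurable [set w | X k w = v]) /\
  (forall (v0 : E N d) (vs : seq (E N d)),
     P [set w | X 0%N w = v0 /\ forall k, (k < size vs)%N -> X k.+1 w = nth v0 vs k]
     = (p_init R v0 * \prod_(k < size vs) p_trans R (nth v0 (v0 :: vs) k) (nth v0 vs k))%:E).

Definition disconnects (N d : nat) (S : set (E N d)) : Prop :=
  exists M0 : nat, forall M : nat, (M0 <= M)%N ->
    ~ (exists (x : E N d) (p : seq (E N d)),
         x.2 <= - (M%:Z) /\ (M%:Z) <= (last x p).2 /\
         path (@adj N d) x p /\ (forall v, v \in x :: p -> ~ S v)).

Definition range_upto (N d : nat) (Omega : Type) (X : nat -> Omega -> E N d)
  (w : Omega) (n : nat) : set (E N d) :=
  [set v | exists k, (k <= n)%N /\ X k w = v].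

Definition is_TN (N d : nat) (Omega : Type) (X : nat -> Omega -> E N d)
  (w : Omega) (n : nat) : Prop :=
  disconnects (range_upto X w n) /\
  (forall m, (m < n)%N -> ~ disconnects (range_upto X w m)).

Definition tdist (N : nat) (a b : 'I_N) : nat :=
  let k := if (a <= b)%N then (b - a)%N else (a - b)%N in minn k (N - k).
Definition linf (N d : nat) (x y : E N d) : nat :=
  maxn (\max_(i < d) tdist (x.1 i) (y.1 i)) `|x.2 - y.2|%N.
Definition star_adj (N d : nat) (x y : E N d) : bool := linf x y == 1%N.

Definition inU (N d : nat) (x : E N d) : Prop :=
  (forall j : 'I_d, (j : nat) != 0%N -> (x.1 j : nat) = 0%N) /\
  (forall j : 'I_d, (j : nat) = 0%N ->
     exists k : int, (`|k| <= (2 * Nat.sqrt N)%:Z) /\ ((x.1 j : nat)%:Z = (k %% N%:Z)%Z)).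

Definition on_axis (N d : nat) (x : E N d) (z : int) : Prop :=
  (forall j : 'I_d, (x.1 j : nat) = 0%N) /\ x.2 = z.

From HB Require Import structures.
From mathcomp Require Import all_boot all_order all_algebra.
From mathcomp Require Import all_classical all_reals all_analysis.
Import Order.TTheory GRing.Theory Num.Theory.
From mathcomp Require Import zify.
From Stdlib Require PeanoNat.

(* Almost surely the walk starts at height 0 and only makes nearest-neighbour
   steps, so X_[0,T] lies in the slab of heights at most T < N^(2d+1), and the
   rest is deterministic and planar.  With r = [sqrt N], colour the cells
   (a, h) of the rectangle [0, 2r + 2] x [0, 2K + 2] (K large) blocked when
   (a - r - 1) e_1 + (h - K - 1) e_(d+1) lies in X_[0,T], the two side columns
   being blocked too.  Exploring the interfaces between blocked and free cells
   from the bottom-left corner (a Hex-type parity argument) yields either a free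
   nearest-neighbour crossing from bottom to top, impossible because X_[0,T]
   disconnects, or a blocked *-crossing from left to right.  The latter meets
   the axis a = r + 1 at some x_*, and its part up to the first exit from the
   l^infty-ball of radius r around x_* is the required *-path. *)

Set Implicit Arguments.
Unset Strict Implicit.
Unset Printing Implicit Defensive.

(** * Interfaces of a two-colouring of the grid *)

(* The four cells around a lattice corner are numbered 0 (NE), 1 (SE), 2 (SW),
   3 (NW), and its four sides 0 (N), 1 (E), 2 (S), 3 (W): side k separates
   cells k - 1 and k (mod 4).  A [quad] records which of the cells are blocked. *)
Definition quad := (bool * bool * bool * bool)%type.

Definition quad_cell (c : quad) (j : nat) : bool :=
  let: (c0, c1, c2, c3) := c in
  match j with 0 => c0 | 1 => c1 | 2 => c2 | _ => c3 end.

Definition quad_interface (c : quad) (k : nat) : bool :=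
  quad_cell c ((k + 3) %% 4) != quad_cell c k.

(* At a saddle (all four sides are interfaces) side k is paired with the other
   side of the free cell next to it, so that the free cells met along an
   exploration stay 4-connected. *)
Definition quad_turn (c : quad) (k : nat) : option nat :=
  if ~~ quad_interface c k then None
  else if [&& quad_interface c 0, quad_interface c 1, quad_interface c 2
            & quad_interface c 3] then
    Some (if ~~ quad_cell c k then (k + 1) %% 4 else (k + 3) %% 4)
  else if quad_interface c ((k + 1) %% 4) then Some ((k + 1) %% 4)
  else if quad_interface c ((k + 2) %% 4) then Some ((k + 2) %% 4)
  else Some ((k + 3) %% 4).

Definition quad_free_cell (c : quad) (k : nat) : nat :=
  if quad_cell c ((k + 3) %% 4) then k else (k + 3) %% 4.

Definition cyc4_adj (i j : nat) : bool := ((i + 1) %% 4 == j) || ((j + 1) %% 4 == i).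

Lemma quad_turn_lt c k k' : quad_turn c k = Some k' -> k' < 4.
Proof.
rewrite /quad_turn; case: ifP => // _; case: ifP => _.
  by case: ifP => _ [<-]; rewrite ltn_pmod.
by case: ifP => _; [|case: ifP => _]; case=> <-; rewrite ltn_pmod.
Qed.

Lemma quad_turn_none c k : ~~ quad_interface c k -> quad_turn c k = None.
Proof. by rewrite /quad_turn => ->. Qed.

Lemma quad_turn_interface c k k' : quad_turn c k = Some k' -> quad_interface c k.
Proof. by rewrite /quad_turn; case: (quad_interface c k). Qed.

Lemma quad_turn_some c k : k < 4 -> quad_interface c k ->
  exists k', quad_turn c k = Some k' /\ k' != k.
Proof.
case: c => [[[c0 c1] c2] c3].
by case: k => [|[|[|[|k]]]] //= _; case: c0; case: c1; case: c2; case: c3 => //= _;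
  eexists.
Qed.

Lemma quad_turn_sym c k k' : k < 4 -> quad_turn c k = Some k' -> quad_turn c k' = Some k.
Proof.
case: c => [[[c0 c1] c2] c3].
by case: k => [|[|[|[|k]]]] //= _; case: c0; case: c1; case: c2; case: c3 => //= -[<-].
Qed.

Lemma quad_free_cell_free c k : k < 4 -> quad_interface c k ->
  ~~ quad_cell c (quad_free_cell c k).
Proof.
case: c => [[[c0 c1] c2] c3].
by case: k => [|[|[|[|k]]]] //= _; case: c0; case: c1; case: c2; case: c3.
Qed.

Lemma quad_free_cell_lt c k : k < 4 -> quad_free_cell c k < 4.
Proof. by move=> lt_k4; rewrite /quad_free_cell; case: ifP; rewrite ?ltn_pmod. Qed.

Lemma quad_turn_free_path c k k' : k < 4 -> quad_turn c k = Some k' ->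
  let i := quad_free_cell c k in let i' := quad_free_cell c k' in
  [|| i == i', cyc4_adj i i' |
      has (fun g => ~~ quad_cell c g && cyc4_adj i g && cyc4_adj g i') (iota 0 4)].
Proof.
case: c => [[[c0 c1] c2] c3].
by case: k => [|[|[|[|k]]]] //= _; case: c0; case: c1; case: c2; case: c3 => //= -[<-].
Qed.

Definition near8 (c c' : nat * nat) : bool :=
  [&& c.1 <= c'.1 + 1, c'.1 <= c.1 + 1, c.2 <= c'.2 + 1 & c'.2 <= c.2 + 1].
Definition near4 (c c' : nat * nat) : bool :=
  near8 c c' && ((c.1 == c'.1) || (c.2 == c'.2)).

Section Grid.
Variables (w m : nat) (bl : nat -> nat -> bool).

Definition blocked (c : nat * nat) : bool := bl c.1 c.2.

(* Corner (x, y) is the south-west corner of cell (x, y).  The segment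
   (true, x, y) joins corners (x, y) and (x, y + 1) and separates cells
   (x - 1, y) and (x, y); the segment (false, x, y) joins (x, y) and (x + 1, y)
   and separates cells (x, y - 1) and (x, y). *)
Definition corner_cell (p : nat * nat) (j : nat) : nat * nat :=
  let: (x, y) := p in
  match j with 0 => (x, y) | 1 => (x, y.-1) | 2 => (x.-1, y.-1) | _ => (x.-1, y) end.

Definition corner_quad (p : nat * nat) : quad :=
  (blocked (corner_cell p 0), blocked (corner_cell p 1),
   blocked (corner_cell p 2), blocked (corner_cell p 3)).

Definition corner_side (p : nat * nat) (k : nat) : bool * nat * nat :=
  let: (x, y) := p in
  match k with 0 => (true, x, y) | 1 => (false, x, y)
             | 2 => (true, x, y.-1) | _ => (false, x.-1, y) end.

Definition seg_cells (s : bool * nat * nat) : (nat * nat) * (nat * nat) :=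
  let: (vertical, x, y) := s in
  if vertical then ((x.-1, y), (x, y)) else ((x, y.-1), (x, y)).

Definition seg_interface (s : bool * nat * nat) : bool :=
  blocked (seg_cells s).1 != blocked (seg_cells s).2.

Definition seg_blocked_cell (s : bool * nat * nat) : nat * nat :=
  if blocked (seg_cells s).1 then (seg_cells s).1 else (seg_cells s).2.

Definition seg_free_cell (s : bool * nat * nat) : nat * nat :=
  if blocked (seg_cells s).1 then (seg_cells s).2 else (seg_cells s).1.

Definition seg_ends (s : bool * nat * nat) : seq ((nat * nat) * nat) :=
  let: (vertical, x, y) := s in
  if vertical then [:: ((x, y), 0); ((x, y.+1), 2)]
  else [:: ((x, y), 1); ((x.+1, y), 3)].

Definition inner_corner (p : nat * nat) : bool := (0 < p.1 <= w + 2) && (0 < p.2 <= m + 2).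

Definition seg_next (pk : (nat * nat) * nat) : option (bool * nat * nat) :=
  if inner_corner pk.1 then omap (corner_side pk.1) (quad_turn (corner_quad pk.1) pk.2)
  else None.

Definition seg_nbrs (s : bool * nat * nat) : seq (bool * nat * nat) :=
  pmap seg_next (seg_ends s).

Definition seg_adj (s t : bool * nat * nat) : bool := t \in seg_nbrs s.

Lemma corner_side_ends p k : inner_corner p -> k < 4 -> (p, k) \in seg_ends (corner_side p k).
Proof.
case: p => x y; rewrite /inner_corner /= => /andP[/andP[x0 _] /andP[y0 _]].
by case: k => [|[|[|[|k]]]] //= _; rewrite ?inE ?eqxx // prednK // eqxx orbT.
Qed.

Lemma seg_ends_side s p k : (p, k) \in seg_ends s -> corner_side p k = s /\ k < 4.
Proof. by case: s => [[[] x] y]; rewrite /= !inE => /orP[] /eqP [-> ->]. Qed.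

Lemma seg_interface_side p k : inner_corner p -> k < 4 ->
  seg_interface (corner_side p k) = quad_interface (corner_quad p) k.
Proof.
case: p => x y; rewrite /inner_corner /= => /andP[/andP[x0 _] /andP[y0 _]].
by case: k => [|[|[|[|k]]]] //= _; rewrite /seg_interface /quad_interface //= eq_sym.
Qed.

Lemma corner_side_inj p k k' : inner_corner p -> k < 4 -> k' < 4 ->
  corner_side p k = corner_side p k' -> k = k'.
Proof.
case: p => x y; rewrite /inner_corner /= => /andP[/andP[x0 _] /andP[y0 _]].
by case: k => [|[|[|[|k]]]] //= _; case: k' => [|[|[|[|k']]]] //= _; case; lia.
Qed.

Lemma seg_adjP s t : reflect (exists p k k', [/\ (p, k) \in seg_ends s, inner_corner p,
   quad_turn (corner_quad p) k = Some k' & t = corner_side p k']) (seg_adj s t).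
Proof.
rewrite /seg_adj /seg_nbrs mem_pmap; apply: (iffP idP).
  case/mapP => -[p k] end_pk; rewrite /seg_next /=; case: ifP => // inner_p.
  by case turn_k: quad_turn => [k'|] //= [->]; exists p, k, k'.
case=> p [k [k' [end_pk inner_p turn_k ->]]]; apply/mapP; exists (p, k) => //.
by rewrite /seg_next /= inner_p turn_k.
Qed.

Lemma seg_adj_sym s t : seg_adj s t -> seg_adj t s.
Proof.
case/seg_adjP => p [k [k' [end_pk inner_p turn_k ->]]].
have [<- lt_k4] := seg_ends_side end_pk.
apply/seg_adjP; exists p, k', k; split=> //.
- exact/corner_side_ends/(quad_turn_lt turn_k).
- exact: quad_turn_sym.
Qed.

Lemma seg_adj_irr s : ~~ seg_adj s s.
Proof.
apply/negP; case/seg_adjP => p [k [k' [end_pk inner_p turn_k e_s]]].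
have [e_side lt_k4] := seg_ends_side end_pk.
have [k1 [turn_k1 neq_k1]] := quad_turn_some lt_k4 (quad_turn_interface turn_k).
move: turn_k1 neq_k1; rewrite turn_k => -[<-]; apply/negP; rewrite negbK.
rewrite -e_side in e_s.
by rewrite (corner_side_inj inner_p (quad_turn_lt turn_k) lt_k4 (esym e_s)).
Qed.

Lemma seg_adj_interface s t : seg_adj s t -> seg_interface s.
Proof.
case/seg_adjP => p [k [k' [end_pk inner_p turn_k _]]].
have [<- lt_k4] := seg_ends_side end_pk.
by rewrite seg_interface_side // (quad_turn_interface turn_k).
Qed.

Lemma corner_cell_near8 p i j : near8 (corner_cell p i) (corner_cell p j).
Proof.
case: p => x y; rewrite /near8.
by case: i => [|[|[|[|i]]]]; case: j => [|[|[|[|j]]]] /=; apply/and4P; split; lia.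
Qed.

Lemma corner_cell_near4 p i j : inner_corner p -> i < 4 -> j < 4 -> cyc4_adj i j ->
  near4 (corner_cell p i) (corner_cell p j).
Proof.
case: p => x y; rewrite /inner_corner /= => /andP[/andP[x0 _] /andP[y0 _]]; rewrite /near4 /near8 /cyc4_adj.
case: i => [|[|[|[|i]]]] //= _; case: j => [|[|[|[|j]]]] //= _ _;
  apply/andP; split; try (apply/and4P; split); lia.
Qed.

Lemma corner_quadE p j : quad_cell (corner_quad p) j = blocked (corner_cell p j).
Proof. by case: p => x y; case: j => [|[|[|[|j]]]]. Qed.

Lemma seg_blocked_cell_corner p k : k < 4 ->
  exists i, seg_blocked_cell (corner_side p k) = corner_cell p i.
Proof.
case: p => x y; case: k => [|[|[|[|k]]]] //= _; rewrite /seg_blocked_cell /=.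
- by case: ifP => _; [exists 3 | exists 0].
- by case: ifP => _; [exists 1 | exists 0].
- by case: ifP => _; [exists 2 | exists 1].
- by case: ifP => _; [exists 2 | exists 3].
Qed.

Lemma seg_free_cell_corner p k : k < 4 -> quad_interface (corner_quad p) k ->
  seg_free_cell (corner_side p k) = corner_cell p (quad_free_cell (corner_quad p) k).
Proof.
case: p => x y; case: k => [|[|[|[|k]]]] //= _;
  by rewrite /seg_free_cell /quad_free_cell /quad_interface /=;
     case: (blocked _); case: (blocked _).
Qed.

Lemma seg_blocked_cell_blocked s : seg_interface s -> blocked (seg_blocked_cell s).
Proof. by rewrite /seg_interface /seg_blocked_cell; case: ifP => //= _; case: (blocked _). Qed.

Lemma seg_adj_near8 s t : seg_adj s t -> near8 (seg_blocked_cell s) (seg_blocked_cell t).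
Proof.
case/seg_adjP => p [k [k' [end_pk _ turn_k ->]]].
have [<- lt_k4] := seg_ends_side end_pk.
have [i ->] := seg_blocked_cell_corner p lt_k4.
have [j ->] := seg_blocked_cell_corner p (quad_turn_lt turn_k).
exact: corner_cell_near8.
Qed.

Lemma seg_adj_free_path s t : seg_adj s t -> exists g, [/\ path near4 (seg_free_cell s) g,
  last (seg_free_cell s) g = seg_free_cell t & all (fun c => ~~ blocked c) g].
Proof.
case/seg_adjP => p [k [k' [end_pk inner_p turn_k ->]]].
have [<- lt_k4] := seg_ends_side end_pk.
have lt_k'4 := quad_turn_lt turn_k.
have itf_k := quad_turn_interface turn_k.
have itf_k' := quad_turn_interface (quad_turn_sym lt_k4 turn_k).
rewrite !seg_free_cell_corner //.
have := quad_free_cell_free lt_k'4 itf_k'; rewrite corner_quadE => free_k'.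
have near4_free := corner_cell_near4 inner_p.
case/or3P: (quad_turn_free_path lt_k4 turn_k) => [/eqP -> | adj_ik | ].
- by exists [::].
- exists [:: corner_cell p (quad_free_cell (corner_quad p) k')].
  by rewrite /= near4_free ?quad_free_cell_lt ?andbT.
- case/hasP => g; rewrite mem_iota => lt_g4 /andP[/andP[free_g adj_g] adj_g'].
  exists [:: corner_cell p g; corner_cell p (quad_free_cell (corner_quad p) k')].
  rewrite /= !near4_free ?quad_free_cell_lt //=.
  by rewrite -corner_quadE free_g free_k'.
Qed.

Lemma seg_path_blocked s q : path seg_adj s q -> seg_interface s ->
  path near8 (seg_blocked_cell s) (map seg_blocked_cell q) /\
  all blocked (map seg_blocked_cell q).
Proof.
elim: q s => [|t q IHq] s //= /andP[adj_st path_tq] itf_s.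
have itf_t := seg_adj_interface (seg_adj_sym adj_st).
have [-> ->] := IHq _ path_tq itf_t.
by rewrite seg_adj_near8 // seg_blocked_cell_blocked.
Qed.

Lemma seg_path_free s q : path seg_adj s q -> exists g, [/\ path near4 (seg_free_cell s) g,
  last (seg_free_cell s) g = seg_free_cell (last s q) & all (fun c => ~~ blocked c) g].
Proof.
elim: q s => [|t q IHq] s /=; first by exists [::].
case/andP => /seg_adj_free_path [g [g1 g2 g3]] /IHq [g' [g'1 g'2 g'3]].
by exists (g ++ g'); rewrite cat_path last_cat g2 all_cat g1 g'1 g3 g'3.
Qed.

End Grid.

(** * The handshake lemma *)

Section Handshake.
Variables (T : finType) (e : rel T).
Hypotheses (e_sym : symmetric e) (e_irr : irreflexive e).

Lemma sum_adj_even (B : {set T}) : ~~ odd (\sum_(u in B) \sum_(v in B) e u v).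
Proof.
have [n leBn] := ubnP #|B|; elim: n B leBn => // n IHn B leBn.
have [->|[a aB]] := set_0Vmem B; first by rewrite big_set0.
rewrite (eq_bigr (fun u => e u a + \sum_(v in B :\ a) e u v)); last first.
  by move=> u _; rewrite (big_setD1 a aB).
rewrite big_split /= (big_setD1 a aB) /= (big_setD1 a aB) /= e_irr add0n.
have -> : \sum_(v in B :\ a) e a v = \sum_(u in B :\ a) e u a.
  by apply: eq_bigr => u _; rewrite e_sym.
rewrite !oddD addbA addbb /=; apply: IHn.
by move: leBn; rewrite (cardsD1 a B) aB.
Qed.

Lemma handshake (A : {set T}) : (forall u v, u \in A -> e u v -> v \in A) ->
  ~~ odd (\sum_(u in A) #|[set v | e u v]|).
Proof.
move=> A_closed.
rewrite (eq_bigr (fun u => \sum_(v in A) e u v)) ?sum_adj_even // => u uA.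
rewrite -sum1dep_card big_mkcond /= [RHS]big_mkcond /=; apply: eq_bigr => v _.
by case: ifP => [/(A_closed u v uA) -> | ] //; case: ifP.
Qed.

Lemma connect_odd_degree u0 : odd #|[set v | e u0 v]| ->
  exists2 u1, u1 != u0 & connect e u0 u1 && odd #|[set v | e u1 v]|.
Proof.
move=> odd_u0; set C := [set v | connect e u0 v].
case: (pickP [pred u | (u != u0) && (u \in C) && odd #|[set v | e u v]|]).
  by move=> u /andP[/andP[neq_u]]; rewrite inE => Cu odd_u; exists u; rewrite ?Cu.
move=> no_odd; have C_closed u v : u \in C -> e u v -> v \in C.
  by rewrite !inE => Cu /connect1; apply: connect_trans.
have u0C : u0 \in C by rewrite inE connect0.
suff even_rest : ~~ odd (\sum_(u in C :\ u0) #|[set v | e u v]|).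
  by move: (handshake C_closed); rewrite (big_setD1 u0 u0C) oddD odd_u0 (negbTE even_rest).
apply: (big_ind (fun n => ~~ odd n)) => // [a b ea eb | u /setD1P[neq_u Cu]].
  by rewrite oddD (negbTE ea) (negbTE eb).
by move: (no_odd u) => /=; rewrite neq_u Cu /= => ->.
Qed.

End Handshake.

(** * Crossings of a rectangle *)

Section RectangleCrossing.
Variables (w m : nat) (bl : nat -> nat -> bool).
Hypotheses (left_blocked : forall h, bl 0 h)
  (right_blocked : forall a h, w + 2 <= a -> bl a h)
  (bottom_free : forall a, 0 < a <= w + 1 -> bl a 0 = false)
  (top_free : forall a, 0 < a <= w + 1 -> bl a (m + 2) = false).

Local Notation blocked := (blocked bl).
Local Notation seg_adj := (seg_adj w m bl).
Local Notation seg_nbrs := (seg_nbrs w m bl).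
Local Notation seg_next := (seg_next w m bl).
Local Notation inner_corner := (inner_corner w m).

Definition rect_seg (s : bool * nat * nat) : bool :=
  let: (vertical, x, y) := s in
  if vertical then (0 < x <= w + 2) && (y <= m + 2) else (x <= w + 2) && (0 < y <= m + 2).

Definition rect_segs : seq (bool * nat * nat) :=
  [seq s <- allpairs pair (allpairs pair [:: true; false] (iota 0 (w + 3))) (iota 0 (m + 3))
   | rect_seg s].

(* The possible loose ends of an exploration: the interfaces at the four
   corners of the rectangle. *)
Definition start_seg : bool * nat * nat := (true, 1, 0).
Definition exit_segs : seq (bool * nat * nat) :=
  [:: start_seg; (true, w + 2, 0); (true, 1, m + 2); (true, w + 2, m + 2)].

Lemma mem_rect_segs s : (s \in rect_segs) = rect_seg s.
Proof.
rewrite mem_filter; case rect_s: (rect_seg s) => //=.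
case: s rect_s => [[v x] y] rect_s.
have x_in : x \in iota 0 (w + 3) by rewrite mem_iota; case: v rect_s => /andP[]; lia.
have y_in : y \in iota 0 (m + 3) by rewrite mem_iota; case: v rect_s => /andP[]; lia.
apply: (allpairs_f pair _ y_in).
have v_in : v \in [:: true; false] by case: v {rect_s x_in}.
exact: (allpairs_f pair v_in x_in).
Qed.

Lemma rect_seg_side p k : inner_corner p -> k < 4 -> rect_seg (corner_side p k).
Proof.
case: p => x y; rewrite /inner_corner /= => /andP[/andP[x0 x1] /andP[y0 y1]].
by case: k => [|[|[|[|k]]]] //= _; apply/andP; split; lia.
Qed.

Lemma rect_seg_nbrs s t : t \in seg_nbrs s -> rect_seg t.
Proof.
case/seg_adjP => p [k [k' [_ inner_p turn_k ->]]].
exact: rect_seg_side inner_p (quad_turn_lt turn_k).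
Qed.

Lemma seg_next_some p k s : (p, k) \in seg_ends s -> inner_corner p ->
  seg_interface bl s -> exists k', [/\ seg_next (p, k) = Some (corner_side p k'), k' != k & k' < 4].
Proof.
move=> end_pk inner_p itf_s; have [e_s lt_k4] := seg_ends_side end_pk.
have itf_k : quad_interface (corner_quad bl p) k by rewrite -(seg_interface_side _ inner_p lt_k4) e_s.
have [k' [turn_k neq_k']] := quad_turn_some lt_k4 itf_k.
by exists k'; rewrite /seg_next /= inner_p turn_k (quad_turn_lt turn_k).
Qed.

Lemma seg_next_none p k s : (p, k) \in seg_ends s ->
  ~~ (inner_corner p && seg_interface bl s) -> seg_next (p, k) = None.
Proof.
move=> end_pk; have [e_s lt_k4] := seg_ends_side end_pk.
rewrite /seg_next /=; case: ifP => //= inner_p itf_s.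
by rewrite quad_turn_none // -(seg_interface_side _ inner_p lt_k4) e_s.
Qed.

Lemma corner_side_neq_up x y k1 k2 : 0 < y -> k1 < 4 -> k2 < 4 -> k1 != 0 ->
  corner_side (x, y) k1 != corner_side (x, y.+1) k2.
Proof.
by case: k1 => [|[|[|[|k1]]]] //=; case: k2 => [|[|[|[|k2]]]] //= *; apply/eqP; case; lia.
Qed.

Lemma corner_side_neq_right x y k1 k2 : 0 < x -> k1 < 4 -> k2 < 4 -> k1 != 1 ->
  corner_side (x, y) k1 != corner_side (x.+1, y) k2.
Proof.
by case: k1 => [|[|[|[|k1]]]] //=; case: k2 => [|[|[|[|k2]]]] //= *; apply/eqP; case; lia.
Qed.

Lemma seg_nbrs_even s : rect_seg s -> s \notin exit_segs ->
  seg_nbrs s = [::] \/ exists t1 t2, seg_nbrs s = [:: t1; t2] /\ t1 != t2.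
Proof.
move=> rect_s exit_s; case itf_s: (seg_interface bl s); last first.
  left; have none pk : pk \in seg_ends s -> seg_next pk = None.
    by case: pk => p k end_pk; rewrite (seg_next_none end_pk) // itf_s andbF.
  by case: s {rect_s exit_s itf_s} none => [[[] x] y] none; rewrite /seg_nbrs /=
    !none ?inE ?eqxx ?orbT.
right; case: s itf_s rect_s exit_s => [[[] x] y] itf_s /=.
- move=> /andP[/andP[x0 x1] y1] exit_s.
  have y0 : 0 < y.
    case: y itf_s y1 exit_s => [|y] // itf_s _ exit_s; move: itf_s.
    have [ex | nx1] := eqVneq x 1; first by move: exit_s; rewrite ex !inE eqxx.
    have [ex | nx2] := eqVneq x (w + 2).
      by move: exit_s; rewrite ex !inE eqxx !orbT.
    by rewrite /seg_interface /blocked /= !bottom_free //; lia.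
  have ym : y < m + 2.
    case: (ltnP y (m + 2)) => // ym; have ey : y = m + 2 by lia.
    move: itf_s; rewrite /seg_interface /blocked /= ey.
    have [ex | nx1] := eqVneq x 1; first by move: exit_s; rewrite ey ex !inE eqxx !orbT.
    have [ex | nx2] := eqVneq x (w + 2).
      by move: exit_s; rewrite ey ex !inE eqxx !orbT.
    by rewrite !top_free //; lia.
  have [k1 [next1 neq1 lt1]] := @seg_next_some (x, y) 0 (true, x, y) (mem_head _ _)
    ltac:(rewrite /inner_corner /=; lia) itf_s.
  have [k2 [next2 _ lt2]] := @seg_next_some (x, y.+1) 2 (true, x, y)
    ltac:(by rewrite !inE eqxx orbT) ltac:(rewrite /inner_corner /=; lia) itf_s.
  exists (corner_side (x, y) k1), (corner_side (x, y.+1) k2).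
  by rewrite /seg_nbrs /= next1 next2 corner_side_neq_up.
- move=> /andP[x1 /andP[y0 y1]] _.
  have x0 : 0 < x.
    by case: x itf_s x1 => [|x] //; rewrite /seg_interface /blocked /= !left_blocked.
  have xm : x < w + 2.
    by case: (ltnP x (w + 2)) itf_s => // xm; rewrite /seg_interface /blocked /= !right_blocked.
  have [k1 [next1 neq1 lt1]] := @seg_next_some (x, y) 1 (false, x, y) (mem_head _ _)
    ltac:(rewrite /inner_corner /=; lia) itf_s.
  have [k2 [next2 _ lt2]] := @seg_next_some (x.+1, y) 3 (false, x, y)
    ltac:(by rewrite !inE eqxx orbT) ltac:(rewrite /inner_corner /=; lia) itf_s.
  exists (corner_side (x, y) k1), (corner_side (x.+1, y) k2).
  by rewrite /seg_nbrs /= next1 next2 corner_side_neq_right.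
Qed.

Lemma start_seg_interface : seg_interface bl start_seg.
Proof. by rewrite /seg_interface /blocked /= left_blocked bottom_free //; lia. Qed.

Lemma start_seg_nbrs : exists t, seg_nbrs start_seg = [:: t].
Proof.
have [k [next_k _ _]] := @seg_next_some (1, 1) 2 start_seg
  ltac:(by rewrite !inE eqxx orbT) ltac:(rewrite /inner_corner /=; lia) start_seg_interface.
exists (corner_side (1, 1) k); rewrite /seg_nbrs /= next_k.
by rewrite (@seg_next_none (1, 0) 0 start_seg) ?mem_head // /inner_corner /= andbF.
Qed.

Definition rect_adj : rel (seq_sub rect_segs) := fun u v => seg_adj (val u) (val v).

Lemma rect_degree u : uniq (seg_nbrs (val u)) ->
  #|[set v | rect_adj u v]| = size (seg_nbrs (val u)).
Proof.
move=> uniq_u.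
have -> : [set v | rect_adj u v] = [set v in pmap insub (seg_nbrs (val u))].
  by apply/setP => v; rewrite !inE /rect_adj /seg_adj mem_pmap_sub.
rewrite cardsE; move/card_uniqP: (pmap_sub_uniq (seq_sub rect_segs) uniq_u) => ->.
rewrite size_pmap_sub; apply/eqP; rewrite -all_count; apply/allP => t nbr_t.
by rewrite /= mem_rect_segs (rect_seg_nbrs nbr_t).
Qed.

(* The start has degree one and every other non-exit interface has degree 0
   or 2, so by the handshake lemma its component contains another exit. *)
Lemma start_seg_reaches_exit : exists q, [/\ path seg_adj start_seg q,
  last start_seg q \in exit_segs & last start_seg q != start_seg].
Proof.
have start_in : start_seg \in rect_segs by rewrite mem_rect_segs /=; lia.
pose u0 : seq_sub rect_segs := SeqSub start_in.
have rect_adj_sym : symmetric rect_adj by move=> u v; apply/idP/idP => /seg_adj_sym.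
have rect_adj_irr : irreflexive rect_adj by move=> u; apply/negbTE/seg_adj_irr.
have [|u1 neq_u1 /andP[/connectP[p path_p e_u1] odd_u1]] :=
  connect_odd_degree rect_adj_sym rect_adj_irr (u0 := u0).
  by have [t nbrs_t] := start_seg_nbrs; rewrite rect_degree nbrs_t.
subst u1; exists (map val p); rewrite -[start_seg]/(val u0) path_map last_map; split=> //.
  apply: contraLR odd_u1 => not_exit.
  have rect_u1 : rect_seg (val (last u0 p)) by rewrite -mem_rect_segs (valP (last u0 p)).
  have deg_u1 := @rect_degree (last u0 p).
  case: (seg_nbrs_even rect_u1 not_exit) => [nbrs_u1 | [t1 [t2 [nbrs_u1 neq_t]]]].
    by rewrite deg_u1 nbrs_u1.
  by rewrite deg_u1 nbrs_u1 //= inE neq_t.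
Qed.

Lemma rectangle_crossing :
  (exists g, [/\ path near4 (1, 0) g, (last (1, 0) g).2 = m + 2 &
                 all (fun c => ~~ blocked c) g]) \/
  (exists g, [/\ path near8 (0, 0) g, (last (0, 0) g).1 = w + 2 & all blocked g]).
Proof.
have [q [path_q exit_q neq_q]] := start_seg_reaches_exit.
have blocked_start : seg_blocked_cell bl start_seg = (0, 0).
  by rewrite /seg_blocked_cell /blocked /= left_blocked.
have free_start : seg_free_cell bl start_seg = (1, 0).
  by rewrite /seg_free_cell /blocked /= left_blocked.
have blocked_crossing : seg_blocked_cell bl (last start_seg q) = (w + 2, 0) \/
    seg_blocked_cell bl (last start_seg q) = (w + 2, m + 2) ->
    exists g, [/\ path near8 (0, 0) g, (last (0, 0) g).1 = w + 2 & all blocked g].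
  have [path_b all_b] := seg_path_blocked path_q start_seg_interface.
  move=> e_last; exists (map (seg_blocked_cell bl) q); rewrite -blocked_start last_map.
  by split=> //; case: e_last => ->.
move: exit_q neq_q; rewrite !inE => /or4P[/eqP -> | /eqP e_q | /eqP e_q | /eqP e_q] //= _.
- right; apply: blocked_crossing; left.
  by rewrite e_q /seg_blocked_cell /blocked /= bottom_free //; lia.
- left; have [g [path_g last_g free_g]] := seg_path_free path_q; rewrite free_start in path_g last_g.
  by exists g; rewrite last_g e_q /seg_free_cell /blocked /= left_blocked.
- right; apply: blocked_crossing; right.
  by rewrite e_q /seg_blocked_cell /blocked /= top_free //; lia.
Qed.

End RectangleCrossing.

(** * From a *-crossing to a path leaving a ball *)

Lemma path_first_level (T : Type) (e : T -> T -> bool) (f : T -> nat) t c q :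
  (forall a b, e a b -> f b <= f a + 1) -> path e c q -> f c <= t -> t <= f (last c q) ->
  exists q1 c' q2, [/\ c :: q = q1 ++ c' :: q2, f c' = t & all (fun x => f x < t) q1].
Proof.
move=> f_step; elim: q c => [|y q IHq] c /=.
  by move=> _ le_ct le_tc; exists [::], c, [::]; split=> //; lia.
case/andP => e_cy path_yq le_ct le_t_last.
have [ge_ct | lt_ct] := leqP t (f c).
  by exists [::], c, (y :: q); split=> //; lia.
have le_yt : f y <= t by have := f_step _ _ e_cy; lia.
have [q1 [c' [q2 [-> f_c' below]]]] := IHq y path_yq le_yt le_t_last.
by exists (c :: q1), c', q2; rewrite /= lt_ct below.
Qed.

Lemma path_drop_stutter (T : eqType) (e : rel T) x p :
  path (fun a b => (a == b) || e a b) x p ->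
  exists q, [/\ path e x q, last x q = last x p & {subset q <= p}].
Proof.
elim: p x => [|y p IHp] x /=; first by exists [::].
case/andP => /orP[/eqP <- | e_xy] /IHp[q [path_q last_q sub_q]].
  by exists q; split=> // z /sub_q; rewrite inE orbC => ->.
exists (y :: q); rewrite /= e_xy path_q last_q; split=> // z.
by rewrite !inE => /orP[-> // | /sub_q ->]; rewrite orbT.
Qed.

Definition dist8 (c c' : nat * nat) : nat :=
  maxn (c.1 - c'.1 + (c'.1 - c.1)) (c.2 - c'.2 + (c'.2 - c.2)).

Lemma near8_crossing_ball_path r g : 0 < r -> path near8 (0, 0) g ->
  (last (0, 0) g).1 = 2 * r + 2 ->
  exists c g', [/\ c.1 = r.+1, path (fun a b => near8 a b && (a != b)) c g',
    dist8 c (last c g') = r & forall x, x \in c :: g' -> x \in g /\ dist8 c x <= r].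
Proof.
move=> r_gt0 path_g last_g.
have col_step a b : near8 a b -> b.1 <= a.1 + 1 by case/and4P.
have [[|x0 q1] [c [q2 [/= e_g c1 _]]]] :=
  path_first_level col_step path_g (leq0n r.+1) ltac:(by rewrite last_g; lia).
  by case: e_g => ec; rewrite -ec in c1.
case: e_g => _ e_g; subst g; clear x0.
have path_c : path near8 c q2 by move: path_g; rewrite cat_path => /andP[_] /= /andP[].
have dist_step a b : near8 a b -> dist8 c b <= dist8 c a + 1.
  by case/and4P; rewrite /dist8; lia.
have last_c : r <= dist8 c (last c q2).
  by move: last_g; rewrite last_cat /= /dist8; lia.
have [[|x1 p1] [c' [p2 [/= e_q2 dist_c' below]]]] :=
  path_first_level dist_step path_c ltac:(by rewrite /dist8; lia) last_c.
  by case: e_q2 => ec; rewrite -ec /dist8 in dist_c'; lia.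
case: e_q2 => e_c e_q2; subst x1 q2; move: below => /andP[_ below].
have path_p1 : path near8 c (rcons p1 c').
  by move: path_c; rewrite cat_path rcons_path => /andP[-> /=] /andP[-> _].
have near8_stutter : subrel near8 (fun a b => (a == b) || near8 a b && (a != b)).
  by move=> a b near_ab; case: eqP; rewrite ?near_ab.
have [g' [path_g' last_g' sub_g']] := path_drop_stutter (sub_path near8_stutter path_p1).
exists c, g'; rewrite last_g' last_rcons; split=> // x x_in.
have {x_in} : x \in [:: c, c' & p1].
  move: x_in; rewrite inE => /orP[/eqP -> | /sub_g']; first exact: mem_head.
  by rewrite mem_rcons inE => /orP[/eqP -> | x_p1]; rewrite !inE ?eqxx ?x_p1 ?orbT.
rewrite !inE => /or3P[/eqP -> | /eqP -> | x_p1].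
- by rewrite /dist8 mem_cat inE eqxx orbT; split=> //; lia.
- by rewrite dist_c' !(mem_cat, inE) eqxx !orbT.
- by rewrite ltnW ?(allP below) // !(mem_cat, inE) x_p1 !orbT.
Qed.

(** * The rectangle inside the strip U *)

Section StripEmbedding.
Variables (n d' r K : nat).
Hypotheses (r_gt0 : 0 < r) (r_small : 2 * r <= n.+1).
Local Notation N := n.+1.
Local Notation d := d'.+1.

(* Cell (a, h) is sent to the point (a - (r + 1)) e_1 + (h - (K + 1)) e_{d+1}. *)
Definition strip_coord (a : nat) : 'I_N :=
  inord (if r.+1 <= a then a - r.+1 else N - (r.+1 - a)).
Definition strip_embed (c : nat * nat) : E N d :=
  ([ffun j : 'I_d => if j == 0 :> nat then strip_coord c.1 else ord0], c.2%:Z - K.+1%:Z)%R.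

Definition in_strip (c : nat * nat) : bool := 0 < c.1 <= 2 * r + 1.

Lemma strip_coordE a : 0 < a <= 2 * r + 1 ->
  (strip_coord a : nat) = if r.+1 <= a then a - r.+1 else N - (r.+1 - a).
Proof. by move=> a_in; rewrite /strip_coord inordK //; case: ifP; lia. Qed.

Lemma strip_embed_adj_up c : adj (strip_embed c) (strip_embed (c.1, c.2.+1)).
Proof.
apply/existsP; exists (ord_max, true); rewrite /move /= eqxx /strip_embed /=.
by apply/eqP; congr pair; lia.
Qed.

Lemma strip_embed_adj_down c : adj (strip_embed (c.1, c.2.+1)) (strip_embed c).
Proof.
apply/existsP; exists (ord_max, false); rewrite /move /= eqxx /strip_embed /=.
by case: c => x y; apply/eqP; congr pair; lia.
Qed.

Lemma strip_embed_adj_right c : 0 < c.1 -> c.1 < 2 * r + 1 ->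
  adj (strip_embed c) (strip_embed (c.1.+1, c.2)).
Proof.
move=> c1_gt0 c1_lt; apply/existsP; exists (ord0, true); rewrite /move /= /strip_embed /=.
apply/eqP; congr pair; apply/ffunP => j; rewrite !ffunE; case: eqP => // _.
apply/val_inj; rewrite /= !strip_coordE; try lia.
case: ifP => ha; case: ifP => hb; try lia.
- by rewrite modn_small; lia.
- have -> : (N - (r.+1 - c.1)).+1 = N by lia.
  by rewrite modnn; lia.
- by rewrite modn_small; lia.
Qed.

Lemma strip_embed_adj_left c : 0 < c.1 -> c.1 < 2 * r + 1 ->
  adj (strip_embed (c.1.+1, c.2)) (strip_embed c).
Proof.
move=> c1_gt0 c1_lt; apply/existsP; exists (ord0, false); rewrite /move /= /strip_embed /=.
apply/eqP; congr pair; apply/ffunP => j; rewrite !ffunE; case: eqP => // _.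
apply/val_inj; rewrite /= !strip_coordE; try lia.
case: ifP => ha; case: ifP => hb; try lia.
- have -> : (c.1.+1 - r.+1 + N).-1 = c.1 - r.+1 + N by lia.
  by rewrite modnDr modn_small; lia.
- have -> : (c.1.+1 - r.+1 + N).-1 = N - 1 by lia.
  by rewrite modn_small; lia.
- have -> : (N - (r.+1 - c.1.+1) + N).-1 = N - (r.+1 - c.1) + N by lia.
  by rewrite modnDr modn_small; lia.
Qed.

Lemma tdist_strip_coord a b : 0 < a <= 2 * r + 1 -> 0 < b <= 2 * r + 1 ->
  a - b <= r -> b - a <= r -> tdist (strip_coord a) (strip_coord b) = a - b + (b - a).
Proof.
move=> a_in b_in le_ab le_ba; rewrite /tdist !strip_coordE //.
by case: (leqP r.+1 a) => ? ; case: (leqP r.+1 b) => ?; case: leqP => ?; lia.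
Qed.

Lemma linf_strip_embed a b : in_strip a -> in_strip b -> a.1 - b.1 <= r -> b.1 - a.1 <= r ->
  linf (strip_embed a) (strip_embed b) = dist8 a b.
Proof.
move=> a_in b_in le_ab le_ba.
rewrite /linf big_ord_recl /= !ffunE /= tdist_strip_coord //.
rewrite big1 ?maxn0 => [|i _]; last by rewrite !ffunE /tdist subnn minnE sub0n.
by rewrite /dist8; congr maxn; lia.
Qed.

Lemma strip_embed_adj a b : in_strip a -> in_strip b -> near4 a b -> a != b ->
  adj (strip_embed a) (strip_embed b).
Proof.
case: a => x y; case: b => x' y'; rewrite /in_strip /near4 /near8 /= => a_in b_in.
case/andP => /and4P[h1 h2 h3 h4] /orP[/eqP <- | /eqP <-] neq_ab.
- have [-> | ->] : y' = y.+1 \/ y = y'.+1.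
    by case: (ltngtP y y') neq_ab => [||->]; rewrite ?eqxx; lia.
  + exact: (strip_embed_adj_up (x, y)).
  + exact: (strip_embed_adj_down (x, y')).
- have [ex | ex] : x' = x.+1 \/ x = x'.+1.
    by case: (ltngtP x x') neq_ab => [||->]; rewrite ?eqxx; lia.
  + by subst x'; have /= := @strip_embed_adj_right (x, y); apply; lia.
  + by subst x; have /= := @strip_embed_adj_left (x', y); apply; lia.
Qed.

Lemma strip_embed_star_adj a b : in_strip a -> in_strip b -> near8 a b -> a != b ->
  star_adj (strip_embed a) (strip_embed b).
Proof.
case: a => x y; case: b => x' y'; rewrite /in_strip /near8 /= => a_in b_in near_ab neq_ab.
rewrite /star_adj linf_strip_embed //=; try lia.
apply/eqP; rewrite /dist8 /=.
by case: (eqVneq x x') neq_ab => [->|]; case: (eqVneq y y') => [->|]; rewrite ?eqxx; lia.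
Qed.

Lemma strip_embed_path (e : rel (E N d)) (e' : rel (nat * nat)) c g :
  {in in_strip &, forall a b, e' a b -> e (strip_embed a) (strip_embed b)} ->
  path e' c g -> all in_strip (c :: g) -> path e (strip_embed c) (map strip_embed g).
Proof.
move=> e_e'; elim: g c => [|y g IHg] c //= /andP[e'_cy path_g] /and3P[c_in y_in g_in].
by rewrite e_e' // IHg //= y_in.
Qed.

Lemma inU_strip_embed c : in_strip c -> r <= 2 * Nat.sqrt N -> inU (strip_embed c).
Proof.
case: c => x y; rewrite /in_strip /= => x_in r_le; split=> j /=; rewrite ffunE.
  by move/negbTE => ->.
move=> j0; rewrite j0 eqxx strip_coordE //.
exists (x%:Z - r.+1%:Z)%R; split; first by rewrite ler_norml; apply/andP; split; lia.
case: (leqP r.+1 x) => le_rx; first by rewrite modz_small; lia.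
by rewrite -(modzDr (x%:Z - r.+1%:Z) N%:Z) modz_small; lia.
Qed.

Lemma on_axis_strip_embed h : on_axis (strip_embed (r.+1, h)) (h%:Z - K.+1%:Z)%R.
Proof.
split=> // j /=; rewrite ffunE; case: ifP => // _.
by rewrite strip_coordE ?leqnn ?subnn //; lia.
Qed.

End StripEmbedding.

(** * Steps of the simple random walk *)

Section SimpleRandomWalk.
Local Open Scope classical_set_scope.
Local Open Scope ring_scope.
Variables (R : realType) (N d : nat) (dO : measure_display) (Omega : measurableType dO)
  (P : probability Omega R) (X : nat -> Omega -> E N d).
Hypothesis X_SRW : is_SRW P X.

Definition cylinder (v0 : E N d) (vs : seq (E N d)) : set Omega :=
  [set w | X 0%N w = v0 /\ forall k, (k < size vs)%N -> X k.+1 w = nth v0 vs k].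

Definition path_weight (v0 : E N d) (vs : seq (E N d)) : R :=
  p_init R v0 * \prod_(k < size vs) p_trans R (nth v0 (v0 :: vs) k) (nth v0 vs k).

Lemma measurable_cylinder v0 vs : measurable (cylinder v0 vs).
Proof.
have -> : cylinder v0 vs = [set w | X 0%N w = v0] `&`
    \bigcap_k (if (k < size vs)%N then [set w | X k.+1 w = nth v0 vs k] else setT).
  apply/seteqP; split=> w /= [X0 Xk]; split=> // k.
    by move=> _; case: ifP => // /Xk.
  by move=> lt_k; move: (Xk k I); rewrite lt_k.
have [measX _] := X_SRW.
by apply: measurableI => //; apply: bigcapT_measurable => k; case: ifP.
Qed.

(* Countably many cylinders have weight zero, and each of them is P-null. *)
Lemma ae_path_weight_neq0 :
  {ae P, forall w, forall vs, cylinder (X 0%N w) vs w -> path_weight (X 0%N w) vs != 0}.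
Proof.
have [_ P_cylinder] := X_SRW.
pose F (i : nat) : set Omega :=
  if unpickle i is Some (v0, vs) then
    if path_weight v0 vs == 0 then cylinder v0 vs else set0
  else set0.
have F_null i : P.-negligible (F i).
  rewrite /F; case: unpickle => [[v0 vs]|]; last exact: negligible_set0.
  case: eqP => [weight0 | _]; last exact: negligible_set0.
  apply/negligibleP; first exact: measurable_cylinder.
  by apply: eq_trans (P_cylinder v0 vs) _; rewrite -/(path_weight v0 vs) weight0.
apply: negligibleS (negligible_bigcup F_null) => w /= not_ae; apply: contrapT => notF.
apply: not_ae => vs cyl_w; apply/negP => /eqP weight0; apply: notF.
by exists (pickle (X 0%N w, vs)) => //; rewrite /F pickleK weight0 eqxx.
Qed.

Lemma SRW_ae_nearest_neighbour :
  {ae P, forall w, (X 0%N w).2 = 0 /\ forall k, adj (X k w) (X k.+1 w)}.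
Proof.
apply: filterS ae_path_weight_neq0 => w weight_neq0.
pose vsn n := [seq X i.+1 w | i <- iota 0 n].
have cyl_vsn n : cylinder (X 0%N w) (vsn n) w.
  split=> // k; rewrite size_map size_iota => lt_kn.
  by rewrite (nth_map 0%N) ?size_iota // nth_iota.
split.
  move: (weight_neq0 _ (cyl_vsn 0%N)); rewrite /path_weight /p_init.
  by have [// | _] := eqVneq (X 0%N w).2 0; rewrite mul0r eqxx.
move=> k; move: (weight_neq0 _ (cyl_vsn k.+1)); rewrite /path_weight mulf_eq0 negb_or.
case/andP=> _; have lt_k : (k < size (vsn k.+1))%N by rewrite size_map size_iota.
move/prodf_neq0 => /(_ (Ordinal lt_k) isT) /=.
have -> : nth (X 0%N w) (X 0%N w :: vsn k.+1) k = X k w.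
  by case: k {lt_k} => [|k] //=; rewrite (nth_map 0%N) ?size_iota // nth_iota.
rewrite (nth_map 0%N) ?size_iota // nth_iota // add0n /p_trans /adj.
apply: contraR => /existsPn no_step; rewrite (eq_card0 (A := [pred s | _])) ?mul0r //.
by move=> s; rewrite inE; apply/negbTE/no_step.
Qed.

End SimpleRandomWalk.

Lemma adj_height N d (x y : E N d) : adj x y -> (`|y.2| <= `|x.2| + 1)%N.
Proof. by case/existsP => -[i b] /eqP <-; rewrite /move; case: ifP => _ /=; case: b; lia. Qed.

(** * Disconnecting sets of bounded height *)

Section DisconnectingSet.
Variables (n d' r K : nat) (S : set (E n.+1 d'.+1)).
Hypothesis S_low : forall v, S v -> `|v.2| <= K.

Local Notation embed := (strip_embed n d' r K).

Definition strip_blocked (a h : nat) : bool :=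
  [|| a == 0, 2 * r + 2 <= a | `[< S (embed (a, h)) >]].

Lemma strip_blocked_free c : ~~ strip_blocked c.1 c.2 -> in_strip r c /\ ~ S (embed c).
Proof.
case: c => a h /= /norP[a_gt0 /norP[a_le /asboolPn not_S]].
by split=> //; rewrite /in_strip /=; lia.
Qed.

Lemma strip_blocked_S c : in_strip r c -> strip_blocked c.1 c.2 -> S (embed c).
Proof.
case: c => a h; rewrite /in_strip /strip_blocked /= => a_in.
by case/or3P=> [/eqP a0 | a_big | /asboolP //]; lia.
Qed.

Lemma strip_blocked_outer_row a h : 0 < a <= 2 * r + 1 -> h \in [:: 0; 2 * K + 2] ->
  strip_blocked a h = false.
Proof.
move=> a_in h_out; apply/norP; split; first lia.
apply/norP; split; first lia.
by apply/asboolPn => /S_low; rewrite /strip_embed /=; move: h_out; rewrite !inE; lia.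
Qed.

Lemma free_crossing_path g : 0 < r -> 2 * r <= n.+1 -> path near4 (1, 0) g -> (last (1, 0) g).2 = 2 * K + 2 ->
  all (fun c => ~~ strip_blocked c.1 c.2) g ->
  exists x p, [/\ x.2 <= - K.+1%:Z, K.+1%:Z <= (last x p).2, path (@adj _ _) x p
                & forall v, v \in x :: p -> ~ S v]%R.
Proof.
move=> r_gt0 r_small path_g last_g free_g.
have near4_stutter : subrel near4 (fun a b => (a == b) || near4 a b && (a != b)).
  by move=> a b near_ab; case: eqP; rewrite ?near_ab.
have [g' [path_g' last_g' sub_g']] := path_drop_stutter (sub_path near4_stutter path_g).
have free_start : ~~ strip_blocked 1 0 by rewrite strip_blocked_outer_row //; lia.
have free_g' c : c \in (1, 0) :: g' -> in_strip r c /\ ~ S (embed c).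
  rewrite inE => /orP[/eqP -> | /sub_g' c_g]; first exact: (@strip_blocked_free (1, 0) free_start).
  exact/strip_blocked_free/(allP free_g).
exists (embed (1, 0)), (map embed g'); split.
- by rewrite /=; lia.
- by rewrite last_map last_g' /= last_g; lia.
- apply: (strip_embed_path (e' := fun a b => near4 a b && (a != b))) path_g' _.
    by move=> a b a_in b_in /andP[]; apply: strip_embed_adj.
  by apply/allP => c /free_g' [].
- by move=> v; rewrite -map_cons => /mapP[c /free_g' [_ not_S] ->].
Qed.

Lemma blocked_crossing_star_path g : 0 < r -> 2 * r <= n.+1 -> r <= 2 * Nat.sqrt n.+1 ->
  path near8 (0, 0) g -> (last (0, 0) g).1 = 2 * r + 2 ->
  all (fun c => strip_blocked c.1 c.2) g ->
  exists xs zs p, [/\ on_axis xs zs, S xs, path (@star_adj _ _) xs p,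
    forall v, v \in xs :: p -> inU v /\ S v & linf xs (last xs p) = r].
Proof.
move=> r_gt0 r_small r_le path_g last_g blocked_g.
have [c [g' [c1 path_g' last_g' near_c]]] := near8_crossing_ball_path r_gt0 path_g last_g.
have cell_ok x : x \in c :: g' -> [/\ in_strip r x, S (embed x) & dist8 c x <= r].
  case/near_c => x_g dist_x.
  have x_in : in_strip r x by move: dist_x; rewrite /in_strip /dist8 c1; lia.
  by split=> //; apply: strip_blocked_S x_in (allP blocked_g x x_g).
have [c_in S_c _] := cell_ok c (mem_head _ _).
have [last_in _ dist_last] := cell_ok _ (mem_last c g').
exists (embed c), (c.2%:Z - K.+1%:Z)%R, (map embed g'); split=> //.
- by case: c c1 {near_c cell_ok c_in S_c last_g' path_g' dist_last last_in} => a h /= ->;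
    apply: on_axis_strip_embed.
- apply: (strip_embed_path (e' := fun a b => near8 a b && (a != b))) path_g' _.
    by move=> a b a_in b_in /andP[]; apply: strip_embed_star_adj.
  by apply/allP => x /cell_ok [].
- move=> v; rewrite -map_cons => /mapP[x /cell_ok [x_in S_x _] ->].
  by split=> //; apply: inU_strip_embed.
- by rewrite last_map linf_strip_embed // -last_g'; move: dist_last; rewrite /dist8; lia.
Qed.

End DisconnectingSet.

Lemma disconnecting_star_path n d' r T (S : set (E n.+1 d'.+1)) :
  0 < r -> 2 * r <= n.+1 -> r <= 2 * Nat.sqrt n.+1 ->
  disconnects S -> (forall v, S v -> `|v.2| <= T) ->
  exists xs zs p, [/\ on_axis xs zs, `|zs| <= T, path (@star_adj _ _) xs p,
    forall v, v \in xs :: p -> inU v /\ S v & linf xs (last xs p) = r].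
Proof.
move=> r_gt0 r_small r_le [M0 separates] S_low.
pose K := maxn M0 T.
have S_lowK v : S v -> `|v.2| <= K by move/S_low; lia.
have [[g [path_g last_g free_g]] | [g [path_g last_g blocked_g]]] :=
  rectangle_crossing (w := 2 * r) (m := 2 * K) (bl := strip_blocked r K S)
    (fun h => orTb _) (fun a h a_big => ltac:(by rewrite /strip_blocked a_big orbT))
    (fun a a_in => strip_blocked_outer_row S_lowK a_in (mem_head _ _))
    (fun a a_in => strip_blocked_outer_row S_lowK a_in (mem_last 0 [:: 2 * K + 2])).
  case: (separates K.+1 (leq_trans (leq_maxl M0 T) (leqnSn K))).
  have [x [p [x_low p_high path_p not_S]]] := free_crossing_path S_lowK r_gt0 r_small path_g last_g free_g.
  by exists x, p.
have [xs [zs [p [axis_xs S_xs path_p in_p last_p]]]] :=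
  blocked_crossing_star_path r_gt0 r_small r_le path_g last_g blocked_g.
exists xs, zs, p; split=> //.
by case: axis_xs => _ <-; apply: S_low.
Qed.

Lemma two_le_sqrt n : 4 <= n -> 2 <= Nat.sqrt n.
Proof. by move=> /ssrnat.leP le4n; apply/ssrnat.leP/PeanoNat.Nat.sqrt_le_square. Qed.

Lemma double_sqrt_le n : 4 <= n -> 2 * Nat.sqrt n <= n.
Proof.
move=> le4n; have /ssrnat.leP sq_le : (Nat.sqrt n * Nat.sqrt n <= n)%coq_nat.
  by case: (PeanoNat.Nat.sqrt_spec n (PeanoNat.Nat.le_0_l n)).
by apply: leq_trans sq_le; rewrite leq_mul2r two_le_sqrt ?orbT.
Qed.

Local Open Scope classical_set_scope.
Local Open Scope ring_scope.
Unset Implicit Arguments.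

Theorem lemma7p4 (R : realType) (d : nat) (gamma : R) :
  (2 <= d)%N -> 0 < gamma ->
  exists c : nat, forall N : nat, (c <= N)%N ->
  forall (dO : measure_display) (Omega : measurableType dO)
         (P : probability Omega R) (X : nat -> Omega -> E N d),
  is_SRW P X ->
  {ae P, forall w, forall T : nat, is_TN X w T -> T%:R < gamma * (N%:R ^+ (2 * d)) ->
     exists (xs : E N d) (zs : int) (p : seq (E N d)),
       on_axis xs zs /\ (`|zs| <= (N ^ (2 * d + 1))%:Z) /\
       path (@star_adj N d) xs p /\
       (forall v, v \in xs :: p -> inU v /\ range_upto X w T v) /\
       linf xs (last xs p) = Nat.sqrt N}.
Proof.
move=> le2d gamma_gt0; exists (maxn 4 (Num.truncn gamma).+1) => N le_cN dO Omega P X X_SRW.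
apply: filterS (SRW_ae_nearest_neighbour X_SRW) => w [X0_height X_adj] T [T_disc _] T_lt.
have height_X k : (`|(X k w).2| <= k)%N.
  by elim: k => [|k IHk]; [rewrite X0_height | have := adj_height (X_adj k); lia].
have range_low v : range_upto X w T v -> (`|v.2| <= T)%N.
  by case=> k [le_kT <-]; apply: leq_trans (height_X k) le_kT.
have T_small : (T < N ^ (2 * d + 1))%N.
  rewrite -(ltr_nat R) natrX addn1 exprS; apply: (lt_le_trans T_lt).
  apply: ler_wpM2r; first by rewrite exprn_ge0.
  apply: le_trans (ltW (truncnS_gt gamma)) _.
  by rewrite ler_nat; apply: leq_trans (leq_maxr _ _) le_cN.
have [n eN] : exists n, N = n.+1 by exists N.-1; lia.
have [d' ed] : exists d', d = d'.+1 by exists d.-1; lia.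
subst N d; have le4N : (4 <= n.+1)%N by apply: leq_trans (leq_maxl _ _) le_cN.
have [xs [zs [p [axis_xs zs_le path_p in_p last_p]]]] :=
  disconnecting_star_path (leq_trans (ltn0Sn 1) (two_le_sqrt le4N)) (double_sqrt_le le4N)
    (leq_pmull _ (ltn0Sn 1)) T_disc range_low.
by exists xs, zs, p; do !split=> //; lia.
Qed.
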